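(* Let $\alpha,\gamma\in(0,1)$ and let $S:[0,1)^2\to[0,1)^2$ be $$S(x,y)=\begin{cases}(x+\alpha \bmod 1,\ y) & \text{if } x\in[0,1-\alpha),\\ (x+\alpha\bmod 1,\ y+\gamma\bmod 1) & \text{if } x\in[1-\alpha,1).\end{cases}$$ If the three numbers $1,\alpha,\alpha\gamma$ are linearly independent over $\mathbb Q$, then for every $(x_0,y_0)\in[0,1)^2$ the set $\{S^n(x_0,y_0):n\in\mathbb N\}$ is dense in $[0,1)^2$. *)

From Stdlib Require Import Reals QArith Qreals.
Open Scope R_scope.

Definition mod1 (x : R) : R := x - IZR (Int_part x).

(* the skew map S on [0,1)^2 (defined on all of R*R; only its values on
   [0,1)^2 matter) *)
Definition S_map (alpha gamma : R) (p : R * R) : R * R :=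
  let (x, y) := p in
  if Rlt_dec x (1 - alpha) then (mod1 (x + alpha), y)
  else (mod1 (x + alpha), mod1 (y + gamma)).

Definition Q_lin_indep3 (a b : R) : Prop :=
  forall p q r : Q, Q2R p + Q2R q * a + Q2R r * b = 0 ->
    p == 0%Q /\ q == 0%Q /\ r == 0%Q.

Definition in_unit_sq (p : R * R) : Prop :=
  0 <= fst p < 1 /\ 0 <= snd p < 1.

Definition dense_in_unit_sq (A : R * R -> Prop) : Prop :=
  forall a b eps, in_unit_sq (a, b) -> 0 < eps ->
    exists p, A p /\ Rabs (fst p - a) < eps /\ Rabs (snd p - b) < eps.

(* Writing s = x0 + n alpha, the n-th iterate is ({s}, {y0 + gamma floor(s)}), and
   gamma floor(s) = gamma x0 + n (alpha gamma) - gamma {s}.  So the orbit is dense as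
   soon as (n alpha, n alpha gamma) is dense modulo Z^2, which is Kronecker's theorem
   for the Q-independent numbers 1, alpha, alpha gamma.  Kronecker's theorem is proved
   with Dirichlet's pigeonhole principle: it yields a short vector u = d (a, b) mod Z^2
   and an integer vector h whose cross product with u is nonzero but tiny, and the
   lattice Z u + Z h (hence Z u + Z^2) then comes close to every point of the plane. *)
From Stdlib Require Import Reals QArith Qreals List Lra Lia Classical.
Open Scope R_scope.

Lemma Int_part_bounds r : IZR (Int_part r) <= r < IZR (Int_part r) + 1.
Proof. destruct (base_Int_part r); lra. Qed.

Lemma Int_part_unique r z : IZR z <= r < IZR z + 1 -> Int_part r = z.
Proof. intros H; symmetry; apply Int_part_spec; lra. Qed.

Lemma mod1_bounds r : 0 <= mod1 r < 1.
Proof. unfold mod1; destruct (Int_part_bounds r); lra. Qed.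

Lemma mod1_eq r z : IZR z <= r < IZR z + 1 -> mod1 r = r - IZR z.
Proof. intros H; unfold mod1; rewrite (Int_part_unique r z H); reflexivity. Qed.

Lemma mod1_id r : 0 <= r < 1 -> mod1 r = r.
Proof. intros H; rewrite (mod1_eq r 0) by (simpl; lra); simpl; ring. Qed.

Lemma mod1_addZ r k : mod1 (r + IZR k) = mod1 r.
Proof.
  destruct (Int_part_bounds r).
  rewrite (mod1_eq _ (Int_part r + k)) by (rewrite plus_IZR; lra).
  unfold mod1; rewrite plus_IZR; ring.
Qed.

Lemma mod1_mod1_add r s : mod1 (mod1 r + s) = mod1 (r + s).
Proof.
  unfold mod1 at 2.
  replace (r - IZR (Int_part r) + s) with (r + s + IZR (- Int_part r))
    by (rewrite opp_IZR; ring).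
  apply mod1_addZ.
Qed.

Lemma S_map_step alpha gamma x y0 : 0 < alpha < 1 ->
  S_map alpha gamma (mod1 x, mod1 (y0 + gamma * IZR (Int_part x))) =
  (mod1 (x + alpha), mod1 (y0 + gamma * IZR (Int_part (x + alpha)))).
Proof.
  intros Ha. unfold S_map. rewrite mod1_mod1_add.
  destruct (Int_part_bounds x).
  destruct (Rlt_dec (mod1 x) (1 - alpha)) as [Hl|Hl]; unfold mod1 at 1 in Hl; f_equal.
  - rewrite (Int_part_unique (x + alpha) (Int_part x)) by lra. reflexivity.
  - rewrite mod1_mod1_add, (Int_part_unique (x + alpha) (Int_part x + 1))
      by (rewrite plus_IZR; simpl; lra).
    rewrite plus_IZR. f_equal; simpl; ring.
Qed.

Lemma S_map_iter alpha gamma x0 y0 (n : nat) :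
  0 < alpha < 1 -> in_unit_sq (x0, y0) ->
  Nat.iter n (S_map alpha gamma) (x0, y0) =
  (mod1 (x0 + INR n * alpha),
   mod1 (y0 + gamma * IZR (Int_part (x0 + INR n * alpha)))).
Proof.
  intros Ha [Hx Hy]; simpl in Hx, Hy. induction n as [|n IH].
  - simpl. rewrite !Rmult_0_l, !Rplus_0_r, (Int_part_unique x0 0) by (simpl; lra).
    rewrite Rmult_0_r, Rplus_0_r, !mod1_id by lra. reflexivity.
  - simpl Nat.iter. rewrite IH, S_map_step, S_INR by exact Ha.
    replace (x0 + INR n * alpha + alpha) with (x0 + (INR n + 1) * alpha) by ring.
    reflexivity.
Qed.

Lemma pigeonhole n (f : nat -> nat) :
  (forall i, (i <= n)%nat -> (f i < n)%nat) -> exists i j, (i < j <= n)%nat /\ f i = f j.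
Proof.
  intros Hf.
  assert (Hdup : ~ NoDup (map f (seq 0 (S n)))).
  { intros Hnd.
    assert (Hincl : incl (map f (seq 0 (S n))) (seq 0 n)).
    { intros y Hy. apply in_map_iff in Hy as [i [<- Hi]].
      apply in_seq in Hi. apply in_seq. specialize (Hf i). lia. }
    pose proof (NoDup_incl_length Hnd Hincl) as Hlen.
    rewrite length_map, !length_seq in Hlen. lia. }
  apply NNPP. intros Hno. apply Hdup, NoDup_nth_error.
  rewrite length_map, length_seq. intros i j Hi E.
  rewrite !nth_error_map, !nth_error_seq in E.
  destruct (Nat.ltb_spec i (S n)), (Nat.ltb_spec j (S n)); try discriminate; try lia.
  injection E as E. destruct (Nat.lt_total i j) as [Hij|[Hij|Hij]]; auto;
    exfalso; apply Hno; [exists i, j | exists j, i]; split; auto; lia.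
Qed.

Definition cell (K : nat) (x : R) : nat := Z.to_nat (Int_part (INR K * mod1 x)).

Lemma cell_spec K x : (0 < K)%nat ->
  IZR (Z.of_nat (cell K x)) <= INR K * mod1 x < IZR (Z.of_nat (cell K x)) + 1
  /\ (cell K x < K)%nat.
Proof.
  intros HK. unfold cell.
  destruct (mod1_bounds x). destruct (Int_part_bounds (INR K * mod1 x)).
  assert (1 <= INR K) by (apply (le_INR 1); lia).
  assert (Hnn : (0 <= Int_part (INR K * mod1 x))%Z).
  { assert (Hgt : IZR (-1) < IZR (Int_part (INR K * mod1 x))) by (simpl; nra).
    apply lt_IZR in Hgt. lia. }
  rewrite Znat.Z2Nat.id by exact Hnn. split; [lra|].
  apply Znat.Nat2Z.inj_lt. rewrite Znat.Z2Nat.id by exact Hnn.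
  apply lt_IZR. rewrite <- INR_IZR_INZ. nra.
Qed.

Lemma cell_eq_close K x y e : (0 < K)%nat -> / INR K < e ->
  cell K x = cell K y -> Rabs (mod1 x - mod1 y) < e.
Proof.
  intros HK HKe E.
  destruct (cell_spec K x HK) as [Hx _], (cell_spec K y HK) as [Hy _].
  rewrite E in Hx.
  assert (HKpos : 0 < INR K) by (apply lt_0_INR; lia).
  assert (Hd : Rabs (INR K * (mod1 x - mod1 y)) < 1) by (apply Rabs_def1; lra).
  rewrite Rabs_mult, (Rabs_right (INR K)) in Hd by lra.
  apply (Rlt_trans _ (/ INR K)); [|exact HKe].
  apply (Rmult_lt_reg_l (INR K)); [lra|]. rewrite Rinv_r by lra. exact Hd.
Qed.

Lemma simultaneous_dirichlet a b e : 0 < e -> exists d p q : Z, (1 <= d)%Z /\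
  Rabs (IZR d * a - IZR p) < e /\ Rabs (IZR d * b - IZR q) < e.
Proof.
  intros He. destruct (archimed_cor1 e He) as [K [HKe HK]].
  destruct (pigeonhole (K * K) (fun j => K * cell K (INR j * a) + cell K (INR j * b)))%nat
    as [i [j [Hij E]]].
  { intros i _. destruct (cell_spec K (INR i * a) HK) as [_ ?].
    destruct (cell_spec K (INR i * b) HK) as [_ ?]. nia. }
  assert (Hcells : cell K (INR i * a) = cell K (INR j * a) /\
                   cell K (INR i * b) = cell K (INR j * b)).
  { destruct (cell_spec K (INR i * b) HK) as [_ ?], (cell_spec K (INR j * b) HK) as [_ ?].
    destruct (Nat.lt_trichotomy (cell K (INR i * a)) (cell K (INR j * a)))
      as [Hc|[Hc|Hc]]; [nia| |nia].
    split; [exact Hc|nia]. }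
  destruct Hcells as [Ea Eb].
  exists (Z.of_nat j - Z.of_nat i)%Z,
    (Int_part (INR j * a) - Int_part (INR i * a))%Z,
    (Int_part (INR j * b) - Int_part (INR i * b))%Z.
  split; [lia|]. rewrite !minus_IZR, <- !INR_IZR_INZ.
  split.
  - replace ((INR j - INR i) * a - (IZR (Int_part (INR j * a)) - IZR (Int_part (INR i * a))))
      with (mod1 (INR j * a) - mod1 (INR i * a)) by (unfold mod1; ring).
    apply (cell_eq_close K); auto.
  - replace ((INR j - INR i) * b - (IZR (Int_part (INR j * b)) - IZR (Int_part (INR i * b))))
      with (mod1 (INR j * b) - mod1 (INR i * b)) by (unfold mod1; ring).
    apply (cell_eq_close K); auto.
Qed.

Lemma small_nonzero_Zcombination B W d : B <> 0 -> 0 < d ->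
  (forall m k : Z, IZR m * W = IZR k * B -> m = 0%Z) ->
  exists m k : Z, 0 < Rabs (IZR m * W - IZR k * B) < d.
Proof.
  intros HB Hd Hirr.
  assert (HaB : 0 < Rabs B) by (apply Rabs_pos_lt; auto).
  destruct (simultaneous_dirichlet (W / B) 0 (d / Rabs B)) as [m [k [_ [Hm [H1 _]]]]].
  { apply Rdiv_lt_0_compat; auto. }
  exists m, k. split.
  - apply Rabs_pos_lt. intros E.
    assert (Hm0 : m = 0%Z) by (apply (Hirr m k); lra). lia.
  - replace (IZR m * W - IZR k * B) with ((IZR m * (W / B) - IZR k) * B) by (field; auto).
    rewrite Rabs_mult.
    apply (Rmult_lt_compat_r (Rabs B)) in H1; auto.
    replace (d / Rabs B * Rabs B) with d in H1 by (field; lra). exact H1.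
Qed.

Lemma near_Zmultiple D t : D <> 0 -> exists l : Z, Rabs (t - IZR l * D) < Rabs D.
Proof.
  intros HD. exists (Int_part (t / D)). destruct (Int_part_bounds (t / D)).
  replace (t - IZR (Int_part (t / D)) * D) with ((t / D - IZR (Int_part (t / D))) * D)
    by (field; auto).
  rewrite Rabs_mult, (Rabs_right (_ - _)) by lra.
  assert (0 < Rabs D) by (apply Rabs_pos_lt; auto). nra.
Qed.

(* Decompose z = s u + c u^perp with u^perp = (-u2, u1): the cross product bounds c,
   and s is rounded down to an integer. *)
Lemma small_cross_near_Zmultiple u1 u2 z1 z2 e :
  0 < e <= 1 -> Rabs u1 < e -> Rabs u2 < e -> u1 <> 0 ->
  Rabs (u1 * z2 - u2 * z1) < e * (u1 * u1 + u2 * u2) ->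
  exists K : Z, Rabs (z1 - IZR K * u1) < 2 * e /\ Rabs (z2 - IZR K * u2) < 2 * e.
Proof.
  intros He H1 H2 Hu1 Hcross.
  set (N := u1 * u1 + u2 * u2) in *.
  assert (HN : 0 < N) by (unfold N; pose proof (Rsqr_pos_lt u1 Hu1); unfold Rsqr in *; nra).
  set (s := (z1 * u1 + z2 * u2) / N).
  set (c := (u1 * z2 - u2 * z1) / N).
  exists (Int_part s). destruct (Int_part_bounds s).
  set (s' := s - IZR (Int_part s)).
  assert (Hc : Rabs c < e).
  { unfold c, Rdiv. rewrite Rabs_mult, (Rabs_right (/ N)) by (left; apply Rinv_0_lt_compat; auto).
    apply (Rmult_lt_reg_r N); auto. rewrite Rmult_assoc, Rinv_l; lra. }
  assert (E1 : z1 - IZR (Int_part s) * u1 = s' * u1 - c * u2)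
    by (unfold s', c, s; generalize (IZR (Int_part ((z1 * u1 + z2 * u2) / N)));
        intros; unfold N in *; field; lra).
  assert (E2 : z2 - IZR (Int_part s) * u2 = s' * u2 + c * u1)
    by (unfold s', c, s; generalize (IZR (Int_part ((z1 * u1 + z2 * u2) / N)));
        intros; unfold N in *; field; lra).
  assert (Hs'v : forall v, Rabs v < e -> Rabs (s' * v) < e).
  { intros v Hv. rewrite Rabs_mult, (Rabs_right s') by (unfold s'; lra).
    pose proof (Rabs_pos v). unfold s'; nra. }
  assert (Hcv : forall v, Rabs v < e -> Rabs (c * v) < e).
  { intros v Hv. rewrite Rabs_mult. pose proof (Rabs_pos c). pose proof (Rabs_pos v). nra. }
  rewrite E1, E2. split.
  - unfold Rminus. eapply Rle_lt_trans; [apply Rabs_triang|].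
    rewrite Rabs_Ropp. specialize (Hs'v u1 H1). specialize (Hcv u2 H2). lra.
  - eapply Rle_lt_trans; [apply Rabs_triang|].
    specialize (Hs'v u2 H2). specialize (Hcv u1 H1). lra.
Qed.

Lemma lattice_covering u1 u2 h1 h2 t1 t2 e :
  0 < e <= 1 -> Rabs u1 < e -> Rabs u2 < e -> u1 <> 0 ->
  0 < Rabs (u1 * h2 - u2 * h1) < e * (u1 * u1 + u2 * u2) ->
  exists l K : Z, Rabs (t1 - IZR l * h1 - IZR K * u1) < 2 * e /\
                  Rabs (t2 - IZR l * h2 - IZR K * u2) < 2 * e.
Proof.
  intros He H1 H2 Hu1 [Hpos Hsmall].
  assert (HD : u1 * h2 - u2 * h1 <> 0) by (intros E; rewrite E, Rabs_R0 in Hpos; lra).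
  destruct (near_Zmultiple _ (u1 * t2 - u2 * t1) HD) as [l Hl].
  destruct (small_cross_near_Zmultiple u1 u2 (t1 - IZR l * h1) (t2 - IZR l * h2) e)
    as [K HK]; auto.
  { replace (u1 * (t2 - IZR l * h2) - u2 * (t1 - IZR l * h1))
      with (u1 * t2 - u2 * t1 - IZR l * (u1 * h2 - u2 * h1)) by ring.
    lra. }
  exists l, K. exact HK.
Qed.

Definition Z_lin_indep3 (a b : R) : Prop :=
  forall i j k : Z, IZR i + IZR j * a + IZR k * b = 0 -> i = 0%Z /\ j = 0%Z /\ k = 0%Z.

Lemma Q_lin_indep3_Z a b : Q_lin_indep3 a b -> Z_lin_indep3 a b.
Proof.
  intros H i j k E.
  assert (Hinj : forall z, Q2R (inject_Z z) = IZR z) by (intros z; unfold Q2R; simpl; field).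
  destruct (H (inject_Z i) (inject_Z j) (inject_Z k)) as [A [B C]].
  - rewrite !Hinj; exact E.
  - unfold Qeq in *; simpl in *. lia.
Qed.

Section Kronecker.

Variables a b : R.
Hypothesis indep : Z_lin_indep3 a b.

Lemma kronecker_Z t1 t2 eps : 0 < eps -> exists n P Q : Z,
  Rabs (IZR n * a - IZR P - t1) < eps /\ Rabs (IZR n * b - IZR Q - t2) < eps.
Proof.
  intros Heps.
  set (e := Rmin eps 1 / 2).
  assert (He : 0 < e <= 1 /\ 2 * e <= eps) by (unfold e, Rmin; destruct Rle_dec; lra).
  destruct (simultaneous_dirichlet a b e) as [d [p [q [Hd [Hu1 Hu2]]]]]; [lra|].
  set (u1 := IZR d * a - IZR p) in *. set (u2 := IZR d * b - IZR q) in *.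
  assert (Hu1nz : u1 <> 0).
  { intros E. destruct (indep (- p)%Z d 0%Z) as [_ [Hd0 _]]; [|lia].
    rewrite opp_IZR. unfold u1 in E. simpl. lra. }
  assert (HN : 0 < e * (u1 * u1 + u2 * u2))
    by (pose proof (Rsqr_pos_lt u1 Hu1nz); unfold Rsqr in *; nra).
  destruct (small_nonzero_Zcombination u1 u2 _ Hu1nz HN) as [m [k Hmk]].
  { intros m k E. unfold u1, u2 in E.
    destruct (indep (k * p - m * q)%Z (- (k * d))%Z (m * d)%Z) as [_ [_ Hmd]].
    - rewrite minus_IZR, opp_IZR, !mult_IZR. lra.
    - nia. }
  destruct (lattice_covering u1 u2 (IZR m) (IZR k) t1 t2 e) as [l [K [HK1 HK2]]]; try lra.
  { rewrite Rabs_minus_sym. replace (IZR m * u2 - IZR k * u1) with (u2 * IZR m - u1 * IZR k)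
      in Hmk by ring. exact Hmk. }
  exists (K * d)%Z, (K * p - l * m)%Z, (K * q - l * k)%Z.
  rewrite !minus_IZR, !mult_IZR. split.
  - replace (IZR K * IZR d * a - (IZR K * IZR p - IZR l * IZR m) - t1)
      with (- (t1 - IZR l * IZR m - IZR K * u1)) by (unfold u1; ring).
    rewrite Rabs_Ropp. lra.
  - replace (IZR K * IZR d * b - (IZR K * IZR q - IZR l * IZR k) - t2)
      with (- (t2 - IZR l * IZR k - IZR K * u2)) by (unfold u2; ring).
    rewrite Rabs_Ropp. lra.
Qed.

(* A negative n is made positive by adding a large multiple s d of a Dirichlet
   denominator for (s a, s b). *)
Lemma kronecker_N t1 t2 eps : 0 < eps -> exists (n : nat) (P Q : Z),
  Rabs (INR n * a - IZR P - t1) < eps /\ Rabs (INR n * b - IZR Q - t2) < eps.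
Proof.
  intros Heps.
  destruct (kronecker_Z t1 t2 (eps / 2)) as [n [P [Q [H1 H2]]]]; [lra|].
  set (s := (Z.abs n + 1)%Z).
  destruct (simultaneous_dirichlet (IZR s * a) (IZR s * b) (eps / 2))
    as [d [p [q [Hd [E1 E2]]]]]; [lra|].
  assert (Hpos : (0 <= n + s * d)%Z) by (unfold s; nia).
  exists (Z.to_nat (n + s * d)), (P + p)%Z, (Q + q)%Z.
  rewrite INR_IZR_INZ, Znat.Z2Nat.id by exact Hpos.
  rewrite !plus_IZR, !mult_IZR. split.
  - replace ((IZR n + IZR s * IZR d) * a - (IZR P + IZR p) - t1)
      with ((IZR n * a - IZR P - t1) + (IZR d * (IZR s * a) - IZR p)) by ring.
    eapply Rle_lt_trans; [apply Rabs_triang|]. lra.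
  - replace ((IZR n + IZR s * IZR d) * b - (IZR Q + IZR q) - t2)
      with ((IZR n * b - IZR Q - t2) + (IZR d * (IZR s * b) - IZR q)) by ring.
    eapply Rle_lt_trans; [apply Rabs_triang|]. lra.
Qed.

End Kronecker.

(* The targets are shifted by eta, 2 eta so that no reduction modulo 1 wraps around. *)
Lemma skew_point_close gamma s y0 a b eta (P Q : Z) :
  0 < gamma < 1 -> 0 <= a -> 0 <= b -> 0 < eta -> 5 * eta <= 1 - a -> 5 * eta <= 1 - b ->
  Rabs (s - IZR P - (a + eta)) < eta ->
  Rabs (y0 + gamma * s - IZR Q - gamma * (a + eta) - (b + 2 * eta)) < eta ->
  Rabs (mod1 s - a) < 4 * eta /\
  Rabs (mod1 (y0 + gamma * IZR (Int_part s)) - b) < 4 * eta.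
Proof.
  intros Hg Ha Hb Heta Ha1 Hb1 Hs Hy.
  set (X := s - IZR P) in *.
  set (V := y0 + gamma * s - IZR Q - gamma * X).
  assert (HgX : Rabs (gamma * (X - (a + eta))) < eta).
  { rewrite Rabs_mult, Rabs_right by lra. pose proof (Rabs_pos (X - (a + eta))). nra. }
  apply Rabs_def2 in Hs. apply Rabs_def2 in Hy. apply Rabs_def2 in HgX.
  assert (HP : Int_part s = P) by (apply Int_part_unique; unfold X in *; lra).
  assert (HX : mod1 s = X) by (apply mod1_eq; unfold X in *; lra).
  assert (HV : mod1 (y0 + gamma * IZR P) = V).
  { replace (y0 + gamma * IZR P) with (V + IZR Q) by (unfold V, X; ring).
    rewrite mod1_addZ. apply mod1_id. unfold V. lra. }
  rewrite HP, HX, HV. split; apply Rabs_def1; unfold V; lra.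
Qed.

Theorem proposition2 (alpha gamma : R) :
  0 < alpha < 1 -> 0 < gamma < 1 ->
  Q_lin_indep3 alpha (alpha * gamma) ->
  forall x0 y0 : R, in_unit_sq (x0, y0) ->
  dense_in_unit_sq (fun p => exists n : nat, p = Nat.iter n (S_map alpha gamma) (x0, y0)).
Proof.
  intros Halpha Hgamma Hind x0 y0 Hxy a b eps [Ha Hb] Heps. simpl in Ha, Hb.
  set (eta := Rmin eps (Rmin (1 - a) (1 - b)) / 5).
  assert (Heta : 0 < eta /\ 5 * eta <= eps /\ 5 * eta <= 1 - a /\ 5 * eta <= 1 - b)
    by (unfold eta, Rmin; repeat destruct Rle_dec; lra).
  destruct (kronecker_N alpha (alpha * gamma) (Q_lin_indep3_Z _ _ Hind)
    (a + eta - x0) (b + 2 * eta - y0 - gamma * x0 + gamma * (a + eta)) eta)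
    as [n [P [Q [H1 H2]]]]; [lra|].
  exists (Nat.iter n (S_map alpha gamma) (x0, y0)). split; [exists n; reflexivity|].
  rewrite S_map_iter by assumption. simpl.
  destruct (skew_point_close gamma (x0 + INR n * alpha) y0 a b eta P Q) as [Hx Hy];
    try lra.
  - replace (x0 + INR n * alpha - IZR P - (a + eta))
      with (INR n * alpha - IZR P - (a + eta - x0)) by ring. exact H1.
  - replace (y0 + gamma * (x0 + INR n * alpha) - IZR Q - gamma * (a + eta) - (b + 2 * eta))
      with (INR n * (alpha * gamma) - IZR Q
            - (b + 2 * eta - y0 - gamma * x0 + gamma * (a + eta))) by ring. exact H2.
Qed.
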